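(* Let $(\mathbf{A},\mathbf{b},\mathbf{c})$ be the Butcher tableau of an $s$-stage Runge–Kutta method satisfying the standing assumptions stated in the context, with stability function $r(z)=1+z\mathbf{b}^T(I-z\mathbf{A})^{-1}\mathbb{1}$ and row vector $\mathbf{q}(z)=\mathbf{b}^T(I-z\mathbf{A})^{-1}$. Fix a norm $\|\cdot\|$ on $\mathbb{C}^s$. Then there exists a constant $C_A>0$ such that \[ \max\big(|r(z)|,\ \|\mathbf{q}(z)\|\big)\le C_A|z|^{-1}\qquad\text{for all } z\in\mathbb{C},\ z\neq 0,\ \operatorname{Re} z\le 0. \]
   Context: Standing assumptions on the Runge–Kutta method (matrix $\mathbf{A}\in\mathbb{R}^{s\times s}$, weights $\mathbf{b}\in\mathbb{R}^s$, nodes $\mathbf{c}\in[0,1]^s$): (a) it is $A$-stable (i.e. $|r(z)|\le1$ for $\operatorname{Re}z\le0$) with classical order $p\ge1$ and stage order $q\le p$; (b) $|r(\mathrm{i}y)|<1$ for all real $y\neq0$; (c) $\mathbf{A}$ is invertible; (d) the method is stiffly accurate: $\mathbf{b}^T\mathbf{A}^{-1}=(0,\dots,0,1)$. Here $\mathbb{1}=(1,\dots,1)^T\in\mathbb{R}^s$. *)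

From HB Require Import structures.
From mathcomp Require Import all_boot all_order all_algebra.
From mathcomp Require Import complex.
From mathcomp Require Import reals.
Set Implicit Arguments. Unset Strict Implicit. Unset Printing Implicit Defensive.
Import Order.TTheory GRing.Theory Num.Theory.
Local Open Scope ring_scope.
Local Open Scope complex_scope.

Definition cabs (R : realType) (z : R[i]) : R := complex.Re `|z|.

Definition cmx (R : realType) m n (M : 'M[R]_(m, n)) : 'M[R[i]]_(m, n) :=
  map_mx (fun x : R => x%:C) M.

Definition rk_q (R : realType) s (A : 'M[R]_s) (b : 'cV[R]_s) (z : R[i])
  : 'rV[R[i]]_s :=
  (cmx b)^T *m invmx (1%:M - z *: cmx A).

Definition rk_r (R : realType) s (A : 'M[R]_s) (b : 'cV[R]_s) (z : R[i]) : R[i] :=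
  1 + z * (rk_q A b z *m (const_mx 1 : 'cV[R[i]]_s)) 0 0.

(* A-stability: for Re z <= 0, I - zA is invertible (r has no pole) and |r(z)| <= 1 *)
Definition A_stable (R : realType) s (A : 'M[R]_s) (b : 'cV[R]_s) : Prop :=
  forall z : R[i], complex.Re z <= 0 ->
    (1%:M - z *: cmx A) \in unitmx /\ cabs (rk_r A b z) <= 1.

Definition is_norm (R : realType) s (N : 'rV[R[i]]_s -> R) : Prop :=
  [/\ forall x, N x = 0 -> x = 0,
      forall (a : R[i]) x, N (a *: x) = cabs a * N x
    & forall x y, N (x + y) <= N x + N y].

From HB Require Import structures.
From mathcomp Require Import all_boot all_order all_algebra.
From mathcomp Require Import perm complex.
From mathcomp Require Import reals.
From mathcomp Require Import ring lra.
Set Implicit Arguments. Unset Strict Implicit. Unset Printing Implicit Defensive.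
Import Order.TTheory GRing.Theory Num.Theory.
Local Open Scope ring_scope.
Local Open Scope complex_scope.

(* Since [I - zA] is invertible on the closed left half-plane, every eigenvalue
   [l] of [A] (nonzero because [A] is invertible) has [Re (1/l) > 0].  Each
   factor of [det (I - zA) = prod_l (1 - z l)] is then bounded below there by a
   multiple of [1 + |z|], so by Cramer's rule every entry of [(I - zA)^-1] is at
   most [K / (1 + |z|)].  This bounds [q(z) = b^T (I - zA)^-1] directly.  For
   [r], stiff accuracy gives [b^T = e_s^T A], hence
   [z q(z) = e_s^T (I - zA)^-1 - e_s^T] and [r(z) = e_s^T (I - zA)^-1 1] is the
   sum of the last row of the resolvent. *)

Lemma ler_norm_det (D : numDomainType) n (X : 'M[D]_n) (t : D) :
  (forall i j, `|X i j| <= t) -> `|\det X| <= n`!%:R * t ^+ n.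
Proof.
move=> hX; apply: le_trans (ler_norm_sum _ _ _) _.
rewrite mulr_natl -card_Sn -sumr_const; apply: ler_sum => sigma _.
rewrite normrM normrX normrN normr1 expr1n mul1r normr_prod.
rewrite -[n in t ^+ n]card_ord -prodr_const.
by apply: ler_prod => i _; rewrite normr_ge0 hX.
Qed.

Lemma ler_norm_invmx (F : numFieldType) n (B : 'M[F]_n) (t : F) i j :
  B \in unitmx -> (forall i j, `|B i j| <= t) ->
  `|invmx B i j| <= n.-1`!%:R * t ^+ n.-1 / `|\det B|.
Proof.
case: n B i j => [|n] B i j; first by have := ltn_ord i.
move=> Bu hB; rewrite /invmx Bu !mxE normrM normfV mulrC.
rewrite ler_wpM2r ?invr_ge0 //.
rewrite normrM normrX normrN normr1 expr1n mul1r.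
by apply: ler_norm_det => k l; rewrite !mxE.
Qed.

Lemma horner_char_poly (R : comNzRingType) n (M : 'M[R]_n) x :
  (char_poly M).[x] = \det (x%:M - M).
Proof.
rewrite /char_poly -horner_evalE -det_map_mx; congr (\det _).
apply/matrixP => i j; rewrite !mxE /= horner_evalE.
by case: (i == j); rewrite ?hornerE.
Qed.

Lemma char_poly_split (F : closedFieldType) n (M : 'M[F]_n) :
  {rs : seq F | char_poly M = \prod_(l <- rs) ('X - l%:P)}.
Proof.
have [rs hp] := closed_field_poly_normal (char_poly M).
by exists rs; rewrite hp (monicP (char_poly_monic M)) scale1r.
Qed.

Lemma det_1_sub_scale (F : fieldType) n (M : 'M[F]_n) (rs : seq F) z :
  char_poly M = \prod_(l <- rs) ('X - l%:P) ->
  \det (1%:M - z *: M) = \prod_(l <- rs) (1 - z * l).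
Proof.
move=> hp; have [->|z0] := eqVneq z 0.
  by rewrite scale0r subr0 det1 big1 // => l _; rewrite mul0r subr0.
have size_rs : size rs = n.
  by have := size_char_poly M; rewrite hp size_prod_XsubC => -[].
have -> : 1%:M - z *: M = z *: (z^-1%:M - M).
  by rewrite scalerBr scale_scalar_mx mulfV.
rewrite detZ -horner_char_poly hp horner_prod -size_rs -iter_mulr_1.
rewrite -(count_predT rs) -big_const_seq -big_split /=.
by apply: eq_bigr => l _; rewrite hornerXsubC mulrBr mulfV.
Qed.

Section ComplexModulus.
Variable R : realType.
Implicit Types z w : R[i].

Lemma cabsE z : (cabs z)%:C = `|z|.
Proof. by rewrite /cabs normc_def. Qed.

Lemma cabs_leE z (t : R) : (cabs z <= t) = (`|z| <= t%:C).
Proof. by rewrite -cabsE lecR. Qed.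

Lemma cabs_ge0 z : 0 <= cabs z.
Proof. by rewrite -ler0c cabsE. Qed.

Lemma cabs_gt0 z : (0 < cabs z) = (z != 0).
Proof. by rewrite -ltcR cabsE normr_gt0. Qed.

Lemma cabsM z w : cabs (z * w) = cabs z * cabs w.
Proof. by apply: (@complexI R); rewrite rmorphM /= !cabsE normrM. Qed.

Lemma cabsN z : cabs (- z) = cabs z.
Proof. by apply: (@complexI R); rewrite !cabsE normrN. Qed.

Lemma cabsR (x : R) : cabs x%:C = `|x|.
Proof. by rewrite /cabs normc_def /= expr0n addr0 sqrtr_sqr. Qed.

Lemma cabs0 : cabs (0 : R[i]) = 0.
Proof. by rewrite (cabsR 0) normr0. Qed.

Lemma cabs1 : cabs (1 : R[i]) = 1.
Proof. by rewrite (cabsR 1) normr1. Qed.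

Lemma cabsD z w : cabs (z + w) <= cabs z + cabs w.
Proof. by rewrite cabs_leE rmorphD /= !cabsE ler_normD. Qed.

Lemma cabs_sum (I : Type) (r : seq I) (P : pred I) (F : I -> R[i]) :
  cabs (\sum_(i <- r | P i) F i) <= \sum_(i <- r | P i) cabs (F i).
Proof.
elim/big_rec2: _ => [|i y1 y2 _ IH]; first by rewrite cabs0.
by apply: le_trans (cabsD _ _) _; rewrite lerD2l.
Qed.

Lemma cabs_prod (I : Type) (r : seq I) (P : pred I) (F : I -> R[i]) :
  cabs (\prod_(i <- r | P i) F i) = \prod_(i <- r | P i) cabs (F i).
Proof.
apply: (@complexI R); rewrite rmorph_prod /= cabsE normr_prod.
by apply: eq_bigr => i _; rewrite cabsE.
Qed.

Lemma Re_le_cabs z : complex.Re z <= cabs z.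
Proof. by rewrite -lecR cabsE (le_trans _ (normc_ge_Re z)) // lecR ler_norm. Qed.

End ComplexModulus.

Section LeftHalfPlane.
Variable R : realType.
Implicit Types z l : R[i].

Lemma cabs_1_sub_mul_ge l : l != 0 -> 0 < complex.Re l^-1 ->
  exists2 k : R, 0 < k &
    forall z, complex.Re z <= 0 -> k * (1 + cabs z) <= cabs (1 - z * l).
Proof.
move=> l0; set mu := l^-1; set a := complex.Re mu => a_gt0.
have den_gt0 : 0 < 1 + a + cabs mu.
  by rewrite -addrA ltr_pwDl ?addr_ge0 ?cabs_ge0 // ltW.
exists (cabs l * (a / (1 + a + cabs mu))).
  by rewrite mulr_gt0 ?divr_gt0 ?cabs_gt0.
move=> z z_le0.
have -> : 1 - z * l = l * (mu - z) by rewrite mulrBr mulfV // mulrC.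
rewrite cabsM -mulrA ler_wpM2l ?cabs_ge0 // mulrAC ler_pdivrMr //.
(* [|mu - z|] is at least both [Re mu] and [|z| - |mu|]; the constant is chosen
   so that a positive combination of these two bounds gives the claim. *)
have ge_a : a <= cabs (mu - z).
  by apply: le_trans (Re_le_cabs _); rewrite raddfB lerDl oppr_ge0.
have ge_diff : cabs z - cabs mu <= cabs (mu - z).
  rewrite lerBlDr -[cabs (mu - z)]cabsN opprB.
  by have := cabsD (z - mu) mu; rewrite subrK.
have := cabs_ge0 mu; have := cabs_ge0 z; nra.
Qed.

Lemma cabs_prod_1_sub_mul_ge (rs : seq R[i]) :
  (forall l, l \in rs -> l != 0 /\ 0 < complex.Re l^-1) ->
  exists2 K : R, 0 < K & forall z, complex.Re z <= 0 ->
    K * (1 + cabs z) ^+ size rs <= cabs (\prod_(l <- rs) (1 - z * l)).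
Proof.
elim: rs => [_|l rs IH hrs].
  by exists 1 => // z _; rewrite big_nil expr0 mulr1 cabs1.
have [l0 hl] := hrs l (mem_head _ _).
have [k k_gt0 hk] := cabs_1_sub_mul_ge l0 hl.
have [K K_gt0 hK] :=
  IH (fun l' l'rs => hrs l' (mem_behead (s := l :: rs) l'rs)).
exists (k * K); first exact: mulr_gt0.
move=> z z_le0; rewrite big_cons cabsM exprS mulrACA.
apply: ler_pM; rewrite ?mulr_ge0 ?exprn_ge0 ?addr_ge0 ?cabs_ge0 //;
  rewrite ?(ltW k_gt0) ?(ltW K_gt0) //.
  exact: hk.
exact: hK.
Qed.

End LeftHalfPlane.

Section RowNorm.
Variables (R : realType) (s : nat) (N : 'rV[R[i]]_s -> R).
Hypothesis N_norm : is_norm N.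

Lemma is_normZ (a : R[i]) x : N (a *: x) = cabs a * N x.
Proof. by case: N_norm. Qed.

Lemma is_normD x y : N (x + y) <= N x + N y.
Proof. by case: N_norm. Qed.

Lemma is_norm0 : N 0 = 0.
Proof. by rewrite -(scale0r (0 : 'rV_s)) is_normZ cabs0 mul0r. Qed.

Lemma is_norm_ge0 x : 0 <= N x.
Proof.
have := is_normD x (- x); rewrite subrr is_norm0 -scaleN1r is_normZ cabsN cabs1.
by rewrite mul1r => ?; lra.
Qed.

Lemma is_norm_sum_le (I : Type) (r : seq I) (P : pred I) (F : I -> 'rV_s) :
  N (\sum_(i <- r | P i) F i) <= \sum_(i <- r | P i) N (F i).
Proof.
elim/big_rec2: _ => [|i y1 y2 _ IH]; first by rewrite is_norm0.
by apply: le_trans (is_normD _ _) _; rewrite lerD2l.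
Qed.

Lemma is_norm_row_le (x : 'rV_s) (t : R) :
  (forall j, cabs (x 0 j) <= t) -> N x <= t * \sum_j N (delta_mx 0 j).
Proof.
move=> x_le; rewrite {1}(matrix_sum_delta x) big_ord1.
apply: le_trans (is_norm_sum_le _ _ _) _.
rewrite mulr_sumr; apply: ler_sum => j _.
by rewrite is_normZ ler_wpM2r ?is_norm_ge0.
Qed.

End RowNorm.

Lemma det_cmx (R : realType) n (M : 'M[R]_n) : \det (cmx M) = (\det M)%:C.
Proof. by rewrite -det_map_mx. Qed.

Lemma le_div_1Dcabs (R : realType) (z : R[i]) (x C D : R) :
  z != 0 -> 0 <= C <= D -> x <= C / (1 + cabs z) -> x <= D / cabs z.
Proof.
rewrite -cabs_gt0 => z_gt0 /andP[C_ge0 C_le] /le_trans; apply.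
apply: ler_pM; rewrite ?invr_ge0 ?addr_ge0 ?cabs_ge0 //.
by rewrite lef_pV2 ?posrE ?addr_gt0 // lerDr.
Qed.

Section RungeKutta.
Variables (R : realType) (s : nat) (A : 'M[R]_s) (b : 'cV[R]_s).
Hypothesis A_unit : A \in unitmx.
Hypothesis resolvent_unit :
  forall z : R[i], complex.Re z <= 0 -> (1%:M - z *: cmx A) \in unitmx.

Lemma eigen_inv_Re_gt0 (rs : seq R[i]) :
  char_poly (cmx A) = \prod_(k <- rs) ('X - k%:P) ->
  forall l, l \in rs -> l != 0 /\ 0 < complex.Re l^-1.
Proof.
move=> hp l lrs.
have l_neq0 : l != 0.
  apply: contraTneq A_unit => l0; rewrite unitmxE unitfE negbK.
  have : root (char_poly (cmx A)) l by rewrite hp root_prod_XsubC.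
  rewrite l0 /root horner_char_poly raddf0 sub0r -scaleN1r detZ det_cmx.
  rewrite mulf_eq0 expf_eq0 oppr_eq0 oner_eq0 andbF /=.
  by rewrite -(rmorph0 (real_complex R)) (inj_eq (@complexI R)).
split => //; rewrite ltNge; apply/negP => /resolvent_unit.
rewrite unitmxE unitfE (det_1_sub_scale _ hp) (big_rem l lrs) /=.
by rewrite mulVf // subrr mul0r eqxx.
Qed.

Lemma cabs_det_resolvent_ge : exists2 K : R, 0 < K & forall z : R[i],
  complex.Re z <= 0 -> K * (1 + cabs z) ^+ s <= cabs (\det (1%:M - z *: cmx A)).
Proof.
have [rs hp] := char_poly_split (cmx A).
have size_rs : size rs = s.
  by have := size_char_poly (cmx A); rewrite hp size_prod_XsubC => -[].
have [K K_gt0 hK] := cabs_prod_1_sub_mul_ge (eigen_inv_Re_gt0 hp).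
by exists K => // z z_le0; rewrite (det_1_sub_scale _ hp) -size_rs hK.
Qed.

Lemma cabs_resolvent_entry_le : exists2 K : R, 0 < K & forall z : R[i],
  complex.Re z <= 0 ->
  forall i j, cabs (invmx (1%:M - z *: cmx A) i j) <= K / (1 + cabs z).
Proof.
have [K1 K1_gt0 det_ge] := cabs_det_resolvent_ge.
pose a := \big[Num.max/0]_(ij : 'I_s * 'I_s) `|A ij.1 ij.2|.
have a_ge0 : 0 <= a by exact: bigmax_ge_id.
have A_le i j : `|A i j| <= a by rewrite /a; exact: (le_bigmax _ _ (i, j)).
exists (s.-1`!%:R * (1 + a) ^+ s.-1 / K1).
  by rewrite divr_gt0 // mulr_gt0 ?exprn_gt0 ?ltr0n ?fact_gt0 // ltr_pwDl.
move=> z z_le0 i j; set c := cabs z; set n := s.-1.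
have c_ge0 : 0 <= c := cabs_ge0 z.
set t := (1 + a) * (1 + c).
have entry_le k l : cabs ((1%:M - z *: cmx A) k l) <= t.
  rewrite !mxE; apply: le_trans (cabsD _ _) _; rewrite cabsN cabsM cabsR.
  have : cabs ((k == l)%:R : R[i]) <= 1.
    by case: (k == l); rewrite /= ?cabs0 ?cabs1 ?ler01.
  by have := A_le k l; have := normr_ge0 (A k l); rewrite -/c /t; nra.
have inv_le : cabs (invmx (1%:M - z *: cmx A) i j)
    <= n`!%:R * t ^+ n / cabs (\det (1%:M - z *: cmx A)).
  rewrite cabs_leE !rmorphM fmorphV rmorphXn rmorph_nat /= cabsE.
  by apply: ler_norm_invmx (resolvent_unit z_le0) _ => k l; rewrite -cabs_leE.
have s_pos : (0 < s)%N := leq_ltn_trans (leq0n i) (ltn_ord i).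
have expr_s : (1 + c) ^+ s = (1 + c) * (1 + c) ^+ n by rewrite -exprS prednK.
have := det_ge z z_le0; rewrite -/c expr_s => {}det_ge.
apply: le_trans inv_le _.
have -> : n`!%:R * (1 + a) ^+ n / K1 / (1 + c)
    = n`!%:R * ((1 + a) ^+ n * (1 + c) ^+ n) / (K1 * ((1 + c) * (1 + c) ^+ n)).
  by field; rewrite ?expf_neq0 ?gt_eqF ?ltr_pwDl ?K1_gt0.
have D_gt0 : 0 < K1 * ((1 + c) * (1 + c) ^+ n).
  by rewrite !mulr_gt0 ?exprn_gt0 // ltr_pwDl.
rewrite exprMn ler_wpM2l ?mulr_ge0 ?exprn_ge0 ?addr_ge0 //.
by rewrite lef_pV2 ?posrE // (lt_le_trans D_gt0).
Qed.

Lemma rk_r_stiffly_accurate i z : b^T *m invmx A = delta_mx 0 i ->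
  (1%:M - z *: cmx A) \in unitmx ->
  rk_r A b z = \sum_j invmx (1%:M - z *: cmx A) i j.
Proof.
set B := 1%:M - z *: cmx A => stiffly_accurate B_unit.
have bT : b^T = delta_mx 0 i *m A.
  by rewrite -stiffly_accurate -mulmxA mulVmx ?mulmx1.
have zq : z *: rk_q A b z = row i (invmx B) - delta_mx 0 i.
  have zA : z *: cmx A = 1%:M - B by rewrite opprB addrC subrK.
  rewrite /rk_q /cmx map_trmx bT map_mxM map_delta_mx -/(cmx A) rowE.
  rewrite -/B scalemxAl scalemxAr zA mulmxBr mulmx1 mulmxBl -mulmxA.
  by rewrite mulmxV ?mulmx1.
have -> : rk_r A b z = 1 + ((z *: rk_q A b z) *m (const_mx 1 : 'cV_s)) 0 0.
  by rewrite /rk_r -scalemxAl [X in _ = 1 + X]mxE.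
have row_sum :
    (row i (invmx B) *m (const_mx 1 : 'cV_s)) 0 0 = \sum_j invmx B i j.
  by rewrite mxE; apply: eq_bigr => j _; rewrite !mxE mulr1.
by rewrite zq mulmxBl [X in 1 + X]mxE -rowE row_sum !mxE addrCA subrr addr0.
Qed.

Lemma cabs_rk_r_le i : b^T *m invmx A = delta_mx 0 i ->
  exists2 C : R, 0 <= C & forall z : R[i],
    complex.Re z <= 0 -> cabs (rk_r A b z) <= C / (1 + cabs z).
Proof.
move=> stiffly_accurate; have [K K_gt0 entry_le] := cabs_resolvent_entry_le.
exists (s%:R * K); first by rewrite mulr_ge0 ?ler0n ?(ltW K_gt0).
move=> z z_le0.
rewrite (rk_r_stiffly_accurate stiffly_accurate (resolvent_unit z_le0)).
apply: le_trans (cabs_sum _ _ _) _.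
rewrite -mulrA mulr_natl -[s in _ *+ s]card_ord -sumr_const.
by apply: ler_sum => j _; apply: entry_le.
Qed.

Lemma is_norm_rk_q_le (N : 'rV[R[i]]_s -> R) : is_norm N ->
  exists2 C : R, 0 <= C & forall z : R[i],
    complex.Re z <= 0 -> N (rk_q A b z) <= C / (1 + cabs z).
Proof.
move=> N_norm; have [K K_gt0 entry_le] := cabs_resolvent_entry_le.
exists ((\sum_k `|b k 0|) * K * \sum_j N (delta_mx 0 j)).
  by rewrite !mulr_ge0 ?sumr_ge0 ?(ltW K_gt0) // => j _; apply: is_norm_ge0.
move=> z z_le0; rewrite mulrAC; apply: is_norm_row_le => // j.
rewrite mxE -mulrA mulr_suml; apply: le_trans (cabs_sum _ _ _) _.
by apply: ler_sum => k _; rewrite cabsM !mxE cabsR ler_wpM2l ?entry_le.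
Qed.

End RungeKutta.

Theorem lemma2p3 (R : realType) (s : nat)
  (A : 'M[R]_s) (b : 'cV[R]_s) (c : 'cV[R]_s)
  (* nodes c in [0,1]^s *)
  (hc : forall i : 'I_s, 0 <= c i 0 <= 1)
  (* (a) A-stability *)
  (hAst : A_stable A b)
  (* (a) classical order p >= 1, i.e. the order-1 condition b^T 1 = 1 *)
  (hord : \sum_(i < s) b i 0 = 1)
  (* (b) |r(iy)| < 1 for real y <> 0 *)
  (himag : forall y : R, y != 0 -> cabs (rk_r A b (0 +i* y)) < 1)
  (* (c) A invertible *)
  (hAinv : A \in unitmx)
  (* (d) stiffly accurate: b^T A^{-1} = (0, ..., 0, 1) *)
  (hstiff : b^T *m invmx A = \row_(j < s) ((nat_of_ord j == s.-1)%:R))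
  (* a fixed norm on C^s *)
  (N : 'rV[R[i]]_s -> R) (hN : is_norm N) :
  exists CA : R, 0 < CA /\
    forall z : R[i], z != 0 -> complex.Re z <= 0 ->
      Num.max (cabs (rk_r A b z)) (N (rk_q A b z)) <= CA / cabs z.
Proof.
have resolvent_unit z : complex.Re z <= 0 -> (1%:M - z *: cmx A) \in unitmx.
  by case/hAst.
have s_pos : (0 < s)%N.
  rewrite lt0n; apply/eqP => s0; move: hord; rewrite big1 => [/eqP|j _].
    by rewrite eq_sym oner_eq0.
  by have := ltn_ord j; rewrite {2}s0.
have last_lt : (s.-1 < s)%N by rewrite ltn_predL.
have stiffly_accurate : b^T *m invmx A = delta_mx 0 (Ordinal last_lt).
  by rewrite hstiff; apply/rowP => j; rewrite !mxE.
have [Cr Cr_ge0 r_le] := cabs_rk_r_le hAinv resolvent_unit stiffly_accurate.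
have [Cq Cq_ge0 q_le] := is_norm_rk_q_le b hAinv resolvent_unit hN.
exists (Cq + Cr + 1); split=> [|z z_neq0 z_le0]; first by lra.
rewrite ge_max; apply/andP; split.
  by apply: (le_div_1Dcabs z_neq0 _ (r_le z z_le0)); rewrite Cr_ge0; lra.
by apply: (le_div_1Dcabs z_neq0 _ (q_le z z_le0)); rewrite Cq_ge0; lra.
Qed.
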